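(* Let $\mathcal{H}$ be a complex Hilbert space of finite dimension $n\geq 2$ and let $m\geq 2$. There does not exist a density operator $\rho$ on $\mathcal{H}^{\otimes m}$ that is in single $\sigma$-measurement consensus ($\sigma$SMC) for every self-adjoint operator $\sigma$ on $\mathcal{H}$.
   Context: For $X$ an operator on $\mathcal{H}$, write $X^{(i)}=I^{\otimes(i-1)}\otimes X\otimes I^{\otimes(m-i)}$. Given a self-adjoint $\sigma$ on $\mathcal{H}$ with spectral decomposition $\sigma=\sum_j s_j\Pi_j$ (the $s_j$ pairwise distinct, $\Pi_j$ the orthogonal spectral projectors), a density operator $\rho$ on $\mathcal{H}^{\otimes m}$ (positive semidefinite, trace one) is in $\sigma$SMC if $\mathrm{Tr}(\Pi_j^{(k)}\Pi_j^{(\ell)}\rho)=\mathrm{Tr}(\Pi_j^{(\ell)}\rho)$ for all $k,\ell\in\{1,\dots,m\}$ and all $j$. *)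

From HB Require Import structures.
From mathcomp Require Import all_boot all_order all_algebra.
From mathcomp Require Import reals complex.
Set Implicit Arguments. Unset Strict Implicit. Unset Printing Implicit Defensive.
Import Order.TTheory GRing.Theory Num.Theory.
Local Open Scope ring_scope.

(* Operators on H = C^n are matrices 'M[C]_n (C = R[i]).
   The orthonormal basis of H^{⊗m} is indexed by multi-indices
   x : {ffun 'I_m -> 'I_n}; an operator on H^{⊗m} is given by its matrix
   elements, a function  tidx -> tidx -> C. *)
Definition tidx (n m : nat) := {ffun 'I_m -> 'I_n}.
Definition top (C : Type) (n m : nat) := tidx n m -> tidx n m -> C.

Section Tensor.
Variables (R : realType) (n m : nat).
Local Notation C := R[i].

(* X^{(i)} = I ⊗ ... ⊗ X (i-th factor) ⊗ ... ⊗ I *)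
Definition lift_op (X : 'M[C]_n) (i : 'I_m) : top C n m :=
  fun x y => X (x i) (y i) * (\prod_(k : 'I_m | k != i) ((x k == y k)%:R : C)).

Definition top_mul (A B : top C n m) : top C n m :=
  fun x z => \sum_(y : tidx n m) A x y * B y z.

Definition top_tr (A : top C n m) : C := \sum_(x : tidx n m) A x x.

Definition density (rho : top C n m) : Prop :=
  (forall v : tidx n m -> C,
      0 <= \sum_(x : tidx n m) \sum_(y : tidx n m) Num.conj (v x) * rho x y * v y)
  /\ top_tr rho = 1.

Definition adjmx (A : 'M[C]_n) : 'M[C]_n := (map_mx Num.conj A)^T.

Definition self_adjoint (sigma : 'M[C]_n) : Prop := adjmx sigma = sigma.

(* For s an
   eigenvalue this is the spectral projector Pi_j with s_j = s; otherwise
   P = 0. *)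
Definition spectral_proj (sigma : 'M[C]_n) (s : C) (P : 'M[C]_n) : Prop :=
  [/\ P *m P = P, adjmx P = P &
      forall v : 'cV[C]_n, P *m v = v <-> sigma *m v = s *: v].

Definition sigmaSMC (sigma : 'M[C]_n) (rho : top C n m) : Prop :=
  forall (s : C) (P : 'M[C]_n), spectral_proj sigma s P ->
  forall k l : 'I_m,
    top_tr (top_mul (top_mul (lift_op P k) (lift_op P l)) rho)
    = top_tr (top_mul (lift_op P l) rho).
End Tensor.

From HB Require Import structures.
From mathcomp Require Import all_boot all_order all_algebra.
From mathcomp Require Import reals complex ring.
Import Order.TTheory GRing.Theory Num.Theory.
Local Open Scope ring_scope.
Set Implicit Arguments. Unset Strict Implicit. Unset Printing Implicit Defensive.

(* Fix two distinct sites k, l and let omega(A) = <psi_A| rho_kl |psi_A> be the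
   quadratic form of the reduced state rho_kl on C^n (x) C^n, psi_A being the
   vector with coordinates A. SMC for an orthogonal projector P and for 1 - P
   gives Tr((P (x) (1 - P)) rho) = 0. For P the projector onto e_a, or onto
   (e_a + c e_b)/sqrt 2 with |c| = 1, the operator 1 - P splits into rank-one
   projectors, so positivity of rho forces omega to vanish on e_a (x) e_b
   (a <> b) and on (e_a + c e_b) (x) (e_a - c e_b). Polarizing over
   c = 1, -1, i, -i then gives omega(e_a (x) e_a) = 0 too (here n >= 2 is used),
   hence Tr rho = sum_(a,b) omega(e_a (x) e_b) = 0, contradicting Tr rho = 1. *)

Lemma tidx_neq (n m : nat) (x z : tidx n m) : x != z -> exists i : 'I_m, x i != z i.
Proof.
move=> neq_xz; apply/existsP; move: neq_xz; apply: contraR => /existsPn eq_xz.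
by apply/eqP/ffunP => i; apply/eqP; move: (eq_xz i); rewrite negbK.
Qed.

Lemma prod_tidx_eq (K : comPzSemiRingType) (n m : nat) (x z : tidx n m) :
  \prod_i ((x i == z i)%:R : K) = (x == z)%:R.
Proof.
case: (eqVneq x z) => [->|neq_xz]; first by rewrite big1 // => i _; rewrite eqxx.
by have [i neq_i] := tidx_neq neq_xz; rewrite (bigD1 i) //= (negbTE neq_i) mul0r.
Qed.

Section RankOne.
Variables (R : realType) (n : nat).
Local Notation C := R[i].

Definition tens (u v : 'I_n -> C) : 'M[C]_n := \matrix_(a, b) (u a * v b).
Definition outer (u : 'I_n -> C) : 'M[C]_n := \matrix_(a, b) (u a * (u b)^*).
Definition basisv (b : 'I_n) : 'I_n -> C := fun a => (a == b)%:R.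
Definition norm2 (u : 'I_n -> C) : C := \sum_a (u a)^* * u a.
Definition orthoproj (P : 'M[C]_n) : Prop := P *m P = P /\ adjmx P = P.

Lemma orthoproj_compl (P : 'M[C]_n) : orthoproj P -> orthoproj (1%:M - P).
Proof.
move=> [idemP adjP]; split.
  by rewrite mulmxBl !mulmxBr !mul1mx mulmx1 idemP subrr subr0.
apply/matrixP => a b; move/matrixP: adjP => /(_ a b); rewrite !mxE => adjP.
by rewrite rmorphB /= rmorph_nat eq_sym adjP.
Qed.

Lemma orthoproj_outer (s : C) (u : 'I_n -> C) :
  0 <= s -> s * norm2 u = 1 -> orthoproj (s *: outer u).
Proof.
move=> s_ge0 s_norm; split; apply/matrixP => a b; rewrite !mxE.
  transitivity (s * (u a * (u b)^*) * (s * norm2 u)); last by rewrite s_norm mulr1.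
  by rewrite /norm2 !mulr_sumr; apply: eq_bigr => c _; rewrite !mxE; ring.
by rewrite !rmorphM /= geC0_conj // conjCK; ring.
Qed.

Lemma sum_basisv (p q : 'I_n) : \sum_a basisv a p * (basisv a q)^* = (p == q)%:R.
Proof.
rewrite (bigD1 p) //= big1 => [|a neq_ap].
  by rewrite /basisv eqxx mul1r rmorph_nat addr0 eq_sym.
by rewrite /basisv eq_sym (negbTE neq_ap) mul0r.
Qed.

Lemma sum_outer_basisv : \sum_c outer (basisv c) = 1%:M.
Proof.
apply/matrixP => a b; rewrite summxE mxE -sum_basisv.
by apply: eq_bigr => c _; rewrite mxE.
Qed.

Lemma norm2_basisv (a : 'I_n) : norm2 (basisv a) = 1.
Proof.
rewrite /norm2 (bigD1 a) //= big1 => [|c neq_ca].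
  by rewrite /basisv eqxx rmorph1 mulr1 addr0.
by rewrite /basisv (negbTE neq_ca) mulr0.
Qed.

Section Twist.
Variables (a b : 'I_n) (c : C).
Local Notation u := (fun p => basisv a p + c * basisv b p).
Local Notation v := (fun p => basisv a p - c * basisv b p).

Lemma norm2_twist : a != b -> c^* * c = 1 -> norm2 u = 2.
Proof.
move=> neq_ab unit_c; rewrite /norm2 (bigD1 a) // (bigD1 b) 1?eq_sym //= big1.
  rewrite /basisv !eqxx (negbTE neq_ab) eq_sym (negbTE neq_ab) /= rmorphD rmorphM /=.
  by rewrite !rmorph_nat; ring: unit_c.
move=> p /andP[neq_pa neq_pb].
by rewrite /basisv (negbTE neq_pa) (negbTE neq_pb) mulr0 addr0 mulr0.
Qed.

Lemma outer_twist : c^* * c = 1 ->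
  2^-1 *: outer u + 2^-1 *: outer v = outer (basisv a) + outer (basisv b).
Proof.
move=> unit_c; apply/matrixP => p q; rewrite !mxE !(rmorphD, rmorphB, rmorphM) /=.
by rewrite !rmorph_nat; field: unit_c.
Qed.

Lemma tens_twist : tens u v =
  tens (basisv a) (basisv a) - (c * c) *: tens (basisv b) (basisv b)
  + c *: (tens (basisv b) (basisv a) - tens (basisv a) (basisv b)).
Proof. by apply/matrixP => p q; rewrite !mxE; ring. Qed.

End Twist.

End RankOne.

Arguments basisv {R n} b.

Section TwoSiteMarginal.
Variables (R : realType) (n m : nat).
Local Notation C := R[i].
Variables (k l : 'I_m) (rho : top C n m).
Hypothesis neq_kl : k != l.

Let neq_lk : l != k. Proof. by rewrite eq_sym. Qed.

Definition agree_off (x z : tidx n m) : C :=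
  \prod_(i | (i != k) && (i != l)) ((x i == z i)%:R : C).

Lemma lift_op_mulE (A B : 'M[C]_n) x z :
  top_mul (lift_op A k) (lift_op B l) x z =
  A (x k) (z k) * B (x l) (z l) * agree_off x z.
Proof.
rewrite /top_mul /lift_op.
pose y0 : tidx n m := [ffun i => if i == k then z i else x i].
rewrite (bigD1 y0) //= [X in _ + X]big1 ?addr0; last first.
  move=> y neq_yy0; have [p] := tidx_neq neq_yy0; rewrite ffunE.
  case: (eqVneq p k) => [->|neq_pk]; rewrite ?eqxx ?(negbTE neq_pk) => neq_y.
    by rewrite [X in _ * (_ * X)](bigD1 k) //= (negbTE neq_y) !(mul0r, mulr0).
  by rewrite [X in (_ * X) * _](bigD1 p) //= eq_sym (negbTE neq_y) !(mul0r, mulr0).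
rewrite !ffunE eqxx (negbTE neq_lk) big1 ?mulr1; last first.
  by move=> i neq_il; rewrite ffunE (negbTE neq_il) eqxx.
rewrite (bigD1 k) //= ffunE !eqxx mul1r mulrA; congr (_ * _).
rewrite /agree_off (eq_bigl (fun i => (i != k) && (i != l))) => [|i]; last by rewrite andbC.
by apply: eq_bigr => i /andP[neq_ik _]; rewrite ffunE (negbTE neq_ik).
Qed.

Lemma lift_opE (B : 'M[C]_n) x z :
  lift_op B l x z = (x k == z k)%:R * B (x l) (z l) * agree_off x z.
Proof.
rewrite /lift_op (bigD1 k) //= /agree_off.
rewrite (eq_bigl (fun i => (i != k) && (i != l))) => [|i]; last by rewrite andbC.
by rewrite mulrA (mulrC (B _ _)).
Qed.

Definition expect2 (A B : 'M[C]_n) : C :=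
  \sum_(x : tidx n m) \sum_(z : tidx n m)
    A (x k) (z k) * B (x l) (z l) * agree_off x z * rho z x.

Lemma expect2E (A B : 'M[C]_n) :
  expect2 A B = top_tr (top_mul (top_mul (lift_op A k) (lift_op B l)) rho).
Proof.
by apply: eq_bigr => x _; apply: eq_bigr => z _; rewrite lift_op_mulE.
Qed.

Lemma expect2_1l (B : 'M[C]_n) :
  expect2 1%:M B = top_tr (top_mul (lift_op B l) rho).
Proof.
by apply: eq_bigr => x _; apply: eq_bigr => z _; rewrite lift_opE mxE.
Qed.

Lemma expect2Bl (A A' B : 'M[C]_n) : expect2 (A - A') B = expect2 A B - expect2 A' B.
Proof.
rewrite /expect2 -sumrB; apply: eq_bigr => x _; rewrite -sumrB.
by apply: eq_bigr => z _; rewrite !mxE; ring.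
Qed.

Lemma expect2Dr (A B B' : 'M[C]_n) : expect2 A (B + B') = expect2 A B + expect2 A B'.
Proof.
rewrite /expect2 -big_split; apply: eq_bigr => x _; rewrite -big_split.
by apply: eq_bigr => z _; rewrite !mxE /=; ring.
Qed.

Lemma expect2_sumr (A : 'M[C]_n) (P : pred 'I_n) (F : 'I_n -> 'M[C]_n) :
  expect2 A (\sum_(b | P b) F b) = \sum_(b | P b) expect2 A (F b).
Proof.
apply: (big_morph (expect2 A)) => [B B'|]; first exact: expect2Dr.
by rewrite /expect2 big1 // => x _; rewrite big1 // => z _; rewrite mxE !mulr0 !mul0r.
Qed.

Lemma expect2Zl (c : C) (A B : 'M[C]_n) : expect2 (c *: A) B = c * expect2 A B.
Proof.
rewrite /expect2 mulr_sumr; apply: eq_bigr => x _; rewrite mulr_sumr.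
by apply: eq_bigr => z _; rewrite mxE; ring.
Qed.

Lemma expect2Zr (c : C) (A B : 'M[C]_n) : expect2 A (c *: B) = c * expect2 A B.
Proof.
rewrite /expect2 mulr_sumr; apply: eq_bigr => x _; rewrite mulr_sumr.
by apply: eq_bigr => z _; rewrite mxE; ring.
Qed.

(* [rdm_quad A] is omega(A); the coordinates A of psi_A are indexed by the
   values at the sites k, l. *)
Definition rdm_quad (A : 'M[C]_n) : C :=
  \sum_(x : tidx n m) \sum_(z : tidx n m)
    A (x k) (x l) * (A (z k) (z l))^* * agree_off x z * rho z x.

Lemma rdm_quad_parallelogram (X Y : 'M[C]_n) :
  rdm_quad (X + Y) + rdm_quad (X - Y) = 2 * rdm_quad X + 2 * rdm_quad Y.
Proof.
rewrite /rdm_quad -big_split !mulr_sumr -big_split; apply: eq_bigr => x _.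
rewrite -big_split !mulr_sumr -big_split; apply: eq_bigr => z _.
by rewrite !mxE !(rmorphD, rmorphB) /=; ring.
Qed.

Lemma expect2_outer (u v : 'I_n -> C) :
  expect2 (outer u) (outer v) = rdm_quad (tens u v).
Proof.
apply: eq_bigr => x _; apply: eq_bigr => z _; rewrite !mxE rmorphM /=; ring.
Qed.

Lemma agree_off_kl (x z : tidx n m) :
  (x k == z k)%:R * (x l == z l)%:R * agree_off x z = (x == z)%:R.
Proof.
by rewrite -prod_tidx_eq (bigD1 k) // (bigD1 l) //= mulrA.
Qed.

Lemma trace_rdm_quad :
  top_tr rho = \sum_a \sum_b rdm_quad (tens (basisv a) (basisv b)).
Proof.
rewrite /top_tr /rdm_quad; under [RHS]eq_bigr => a _ do rewrite exchange_big /=.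
rewrite exchange_big /=; apply: eq_bigr => x _.
under eq_bigr => a _ do rewrite exchange_big /=.
rewrite exchange_big /=.
transitivity (\sum_z (x == z)%:R * rho z x).
  rewrite (bigD1 x) //= big1 ?eqxx ?mul1r ?addr0 // => z neq_zx.
  by rewrite eq_sym (negbTE neq_zx) mul0r.
apply: eq_bigr => z _; rewrite -agree_off_kl -!sum_basisv !mulr_suml.
apply: eq_bigr => a _; rewrite mulr_sumr !mulr_suml; apply: eq_bigr => b _.
by rewrite !mxE rmorphM /=; ring.
Qed.

Lemma conj_agree_off (x z : tidx n m) : (agree_off x z)^* = agree_off x z.
Proof. by rewrite rmorph_prod; apply: eq_bigr => i _; rewrite rmorph_nat. Qed.

Lemma agree_off_sum (a : 'I_n) (x z : tidx n m) :
  agree_off x z =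
  \sum_(w : tidx n m | (w k == a) && (w l == a)) agree_off x w * agree_off z w.
Proof.
pose w0 : tidx n m := [ffun i => if (i == k) || (i == l) then a else x i].
have w0_kl : (w0 k == a) && (w0 l == a) by rewrite !ffunE !eqxx orbT /= eqxx.
rewrite (bigD1 w0) //= [X in _ + X]big1 ?addr0; last first.
  move=> w /andP[/andP[/eqP w_k /eqP w_l] neq_ww0].
  have [p] := tidx_neq neq_ww0; rewrite ffunE.
  case: (eqVneq p k) => [->|neq_pk]; first by rewrite w_k eqxx.
  case: (eqVneq p l) => [->|neq_pl]; first by rewrite w_l /= eqxx.
  rewrite /= eq_sym => neq_p.
  rewrite [agree_off x w](bigD1 p) /=; last by rewrite neq_pk neq_pl.
  by rewrite (negbTE neq_p) !mul0r.
rewrite [agree_off x w0]big1 ?mul1r => [|i /andP[neq_ik neq_il]]; last first.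
  by rewrite ffunE (negbTE neq_ik) (negbTE neq_il) eqxx.
apply: eq_bigr => i /andP[neq_ik neq_il].
by rewrite ffunE (negbTE neq_ik) (negbTE neq_il) eq_sym.
Qed.

Hypothesis rho_psd : forall v : tidx n m -> C,
  0 <= \sum_(x : tidx n m) \sum_(y : tidx n m) (v x)^* * rho x y * v y.

(* Splitting agree_off through an environment w writes rdm_quad A as a sum over
   w of expectations of rho in the vectors x |-> A (x k) (x l) * agree_off x w. *)
Lemma rdm_quad_ge0 (A : 'M[C]_n) : 0 <= rdm_quad A.
Proof.
have [x0 _|tidx_empty] := pickP (@predT (tidx n m)); last first.
  by rewrite /rdm_quad big_pred0.
rewrite /rdm_quad.
under eq_bigr => x _ do under eq_bigr => z _ do
  rewrite (agree_off_sum (x0 k)) mulr_sumr mulr_suml.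
under eq_bigr => x _ do rewrite exchange_big /=.
rewrite exchange_big /=; apply: sumr_ge0 => w _; rewrite exchange_big /=.
pose v (x : tidx n m) := A (x k) (x l) * agree_off x w.
rewrite (eq_bigr (fun z => \sum_x (v z)^* * rho z x * v x)) ?rho_psd // => z _.
by apply: eq_bigr => x _; rewrite /v rmorphM /= conj_agree_off; ring.
Qed.

Lemma rdm_quad_eq0_pm (X Y : 'M[C]_n) :
  rdm_quad (X + Y) = 0 -> rdm_quad (X - Y) = 0 -> rdm_quad X = 0.
Proof.
move=> XpY_eq0 XmY_eq0; have /esym/eqP := rdm_quad_parallelogram X Y.
rewrite XpY_eq0 XmY_eq0 addr0 paddr_eq0 ?mulr_ge0 ?ler0n ?rdm_quad_ge0 //.
by rewrite mulf_eq0 pnatr_eq0 /= => /andP[/eqP].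
Qed.

Hypothesis rho_smc :
  forall sigma : 'M[C]_n, self_adjoint sigma -> sigmaSMC sigma rho.

(* SMC for the complementary projector Q = 1 - P reads Tr(Q^(k) Q^(l) rho) =
   Tr(Q^(l) rho), i.e. Tr(P^(k) Q^(l) rho) = 0. *)
Lemma expect2_orthoproj_compl (P : 'M[C]_n) :
  orthoproj P -> expect2 P (1%:M - P) = 0.
Proof.
move=> projP; have [idemQ adjQ] := orthoproj_compl projP.
have specQ : spectral_proj (1%:M - P) 1 (1%:M - P) by split=> // v; rewrite scale1r.
have := rho_smc adjQ specQ k l; rewrite -expect2E -expect2_1l expect2Bl.
by move=> /(canRL (addKr _)); rewrite addNr => /eqP; rewrite oppr_eq0 => /eqP.
Qed.

(* The expectation of P (x) (1 - P) for P = s uu^* splits into nonnegative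
   terms, one of which is s^2 rdm_quad (tens u v). *)
Lemma rdm_quad_tens_eq0 (a b : 'I_n) (s : C) (u v : 'I_n -> C) :
  a != b -> 0 <= s -> s * norm2 u = 1 ->
  s *: outer u + s *: outer v = outer (basisv a) + outer (basisv b) ->
  rdm_quad (tens u v) = 0.
Proof.
move=> neq_ab s_ge0 s_norm decomp.
have oneE : 1%:M = s *: outer u +
    (s *: outer v + \sum_(c | (c != a) && (c != b)) outer (basisv c)).
  by rewrite -sum_outer_basisv (bigD1 a) // (bigD1 b) 1?eq_sym //= !addrA decomp.
have := expect2_orthoproj_compl (orthoproj_outer s_ge0 s_norm).
rewrite oneE addrC addKr expect2Dr expect2Zl expect2Zr expect2_outer expect2_sumr.
under eq_bigr => c _ do rewrite expect2Zl expect2_outer.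
move/eqP; rewrite paddr_eq0; last 2 first.
- by rewrite !mulr_ge0 ?rdm_quad_ge0.
- by apply: sumr_ge0 => c _; rewrite mulr_ge0 ?rdm_quad_ge0.
have s_neq0 : s != 0 by apply: contra_eq_neq s_norm => ->; rewrite mul0r eq_sym oner_eq0.
by rewrite !mulf_eq0 (negbTE s_neq0) => /andP[/eqP].
Qed.

Lemma rdm_quad_basis_offdiag (a b : 'I_n) :
  a != b -> rdm_quad (tens (basisv a) (basisv b)) = 0.
Proof.
move=> neq_ab; apply: (rdm_quad_tens_eq0 (s := 1) neq_ab) => //.
  by rewrite norm2_basisv mul1r.
by rewrite !scale1r.
Qed.

Lemma rdm_quad_twist (a b : 'I_n) (c : C) : a != b -> c^* * c = 1 ->
  rdm_quad (tens (basisv a) (basisv a) - (c * c) *: tens (basisv b) (basisv b)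
            + c *: (tens (basisv b) (basisv a) - tens (basisv a) (basisv b))) = 0.
Proof.
move=> neq_ab unit_c; rewrite -tens_twist.
apply: (rdm_quad_tens_eq0 neq_ab _ _ (outer_twist _ _ unit_c)).
  by rewrite invr_ge0 ler0n.
by rewrite norm2_twist // mulVf // pnatr_eq0.
Qed.

(* Polarization with c = 1, -1, i, -i kills rdm_quad on e_a (x) e_a -+ e_b (x) e_b,
   hence on e_a (x) e_a by the parallelogram law. *)
Lemma rdm_quad_basis_diag (a b : 'I_n) :
  a != b -> rdm_quad (tens (basisv a) (basisv a)) = 0.
Proof.
move=> neq_ab.
set X := tens (basisv a) (basisv a).
pose Z : 'M[C]_n := tens (basisv b) (basisv b).
pose Y : 'M[C]_n := tens (basisv b) (basisv a) - tens (basisv a) (basisv b).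
have twist c : c^* * c = 1 -> rdm_quad (X - (c * c) *: Z + c *: Y) = 0.
  exact: rdm_quad_twist.
have conj_i : ('i : C)^* * 'i = 1 by rewrite conjCi mulNr -expr2 sqrCi opprK.
have ii : ('i : C) * 'i = -1 by rewrite -expr2 sqrCi.
have XmZ : rdm_quad (X - Z) = 0.
  apply: (rdm_quad_eq0_pm (Y := Y)).
    by move: (twist 1); rewrite rmorph1 !mul1r !scale1r; apply.
  move: (twist (-1)); rewrite rmorphN rmorph1 mulrNN !mul1r !scale1r scaleN1r.
  by apply.
have XpZ : rdm_quad (X + Z) = 0.
  apply: (rdm_quad_eq0_pm (Y := 'i *: Y)).
    by move: (twist 'i conj_i); rewrite ii scaleN1r opprK.
  move: (twist (- 'i)); rewrite rmorphN !mulrNN ii scaleN1r opprK scaleNr.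
  by apply.
exact: rdm_quad_eq0_pm XpZ XmZ.
Qed.

End TwoSiteMarginal.

Theorem proposition1 (R : realType) (n m : nat) :
  (2 <= n)%N -> (2 <= m)%N ->
  ~ exists rho : top R[i] n m,
      density rho /\
      forall sigma : 'M[R[i]]_n, self_adjoint sigma -> sigmaSMC sigma rho.
Proof.
move=> n_ge2 m_ge2 [rho [[rho_psd rho_tr] rho_smc]].
pose k : 'I_m := Ordinal (ltnW m_ge2); pose l : 'I_m := Ordinal m_ge2.
have neq_kl : k != l by [].
have other (a : 'I_n) : exists b : 'I_n, a != b.
  pose b0 : 'I_n := Ordinal (ltnW n_ge2); pose b1 : 'I_n := Ordinal n_ge2.
  by case: (eqVneq a b0) => [->|]; [exists b1 | exists b0].
have rdm_quad_basis0 (a b : 'I_n) : rdm_quad k l rho (tens (basisv a) (basisv b)) = 0.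
  case: (eqVneq a b) => [<-|neq_ab]; last exact: rdm_quad_basis_offdiag.
  have [c neq_ac] := other a.
  exact: rdm_quad_basis_diag neq_kl rho_psd rho_smc _ _ neq_ac.
move: rho_tr; rewrite (trace_rdm_quad rho neq_kl) big1 => [/eqP|a _]; last exact: big1.
by rewrite eq_sym oner_eq0.
Qed.
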